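(* Let $\tilde w\in\mathbb{R}^{r_k\times n_k}$ with $r_k\le n_k$ be entrywise nonnegative, of full rank, with each column summing to $1$. Let $\sigma_1$ be its largest singular value and $z_{\max}$ its maximal row sum. Then (1) $n_k/r_k\le\sigma_1^2\le z_{\max}$; (2) $\sigma_1^2=n_k/r_k$ if and only if all row sums of $\tilde w$ are equal, i.e. $z_{\max}=n_k/r_k$. *)

From mathcomp Require Import all_boot all_order all_algebra.
From mathcomp Require Import all_reals.
Set Implicit Arguments. Unset Strict Implicit. Unset Printing Implicit Defensive.
Import Order.TTheory GRing.Theory Num.Theory.
Local Open Scope ring_scope.

Definition singular_value (R : realType) (r n : nat) (W : 'M[R]_(r, n)) (s : R) : Prop :=
  0 <= s /\ eigenvalue (W^T *m W) (s ^+ 2).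

Definition largest_singular_value (R : realType) (r n : nat) (W : 'M[R]_(r, n)) (s : R) : Prop :=
  singular_value W s /\ forall t, singular_value W t -> t <= s.

Definition row_sum (R : realType) (r n : nat) (W : 'M[R]_(r, n)) (i : 'I_r) : R :=
  \sum_(j < n) W i j.

Definition col_sum (R : realType) (r n : nat) (W : 'M[R]_(r, n)) (j : 'I_n) : R :=
  \sum_(i < r) W i j.

(* maximal row sum (row sums of a nonnegative matrix are >= 0, so 0 is a
   harmless neutral element when r > 0). *)
Definition max_row_sum (R : realType) (r n : nat) (W : 'M[R]_(r, n)) : R :=
  \big[Num.max/0]_(i < r) row_sum W i.

(* Write z for the vector of row sums of W; column-stochasticity gives
   sum_i z_i = n.  For the all-ones vector u, u W^T W u^T = |z|^2 and
   u u^T = n, so the Rayleigh principle for the symmetric matrix W^T W yields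
   an eigenvalue, hence s1^2, of at least |z|^2 / n >= (sum_i z_i)^2 / (r n)
   = n / r, with equality in the last step only when z is constant.
   Conversely, an eigenvalue of W^T W is bounded by the largest column sum of
   W^T W (look at the largest entry of an eigenvector), and the k-th column
   sum sum_i W_ik z_i is at most max z since the k-th column of W sums to 1.
   A constant z equals n / r, and then the two bounds meet. *)

From mathcomp Require Import all_boot all_order all_algebra.
From mathcomp Require Import all_reals.
From mathcomp Require Import ring.
From mathcomp.real_closed Require Import complex.
Import Order.TTheory GRing.Theory Num.Theory.
Local Open Scope ring_scope.

Section NormalSpectral.
Local Open Scope sesquilinear_scope.
Context {C : numClosedFieldType} {n : nat} {A : 'M[C]_n}.
Hypothesis normalA : A \is normalmx.

Let P := spectralmx A.
Let d := spectral_diag A.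

Let defA : A = P^t* *m diag_mx d *m P.
Proof.
by rewrite -invmx_unitary ?spectral_unitarymx //; apply/orthomx_spectralP.
Qed.

Lemma eigenvalue_spectral_diag k : eigenvalue A (d 0 k).
Proof.
have PVP : P *m invmx P = 1%:M by rewrite mulmxV ?spectral_unit.
apply/eigenvalueP; exists (row k P).
  rewrite -row_mul {1}defA -invmx_unitary ?spectral_unitarymx //.
  by rewrite !mulmxA PVP mul1mx row_mul row_diag_mx -scalemxAl -rowE.
apply/eqP => rowk0; have /rowP/(_ k)/eqP := congr1 (mulmx^~ (invmx P)) rowk0.
by rewrite -row_mul PVP mul0mx !mxE eqxx oner_eq0.
Qed.

Lemma spectral_quadratic_form (u : 'rV_n) :
  (u *m A *m u^t*) 0 0 = \sum_k d 0 k * `|(u *m P^t*) 0 k| ^+ 2.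
Proof.
have Pu : P *m u^t* = (u *m P^t*)^t* by rewrite trmx_mul map_mxM trmxCK.
rewrite defA !mulmxA -(mulmxA _ P) Pu mul_mx_diag mxE.
by apply: eq_bigr => k _; rewrite !mxE normCK mulrAC mulrC.
Qed.

Lemma spectral_sqr_norm (u : 'rV_n) :
  (u *m u^t*) 0 0 = \sum_k `|(u *m P^t*) 0 k| ^+ 2.
Proof.
have PtP : P^t* *m P = 1%:M.
  by rewrite -invmx_unitary ?spectral_unitarymx ?mulVmx ?spectral_unit.
have -> : u *m u^t* = u *m P^t* *m (u *m P^t*)^t*.
  by rewrite trmx_mul map_mxM trmxCK mulmxA -(mulmxA u) PtP mulmx1.
by rewrite mxE; apply: eq_bigr => k _; rewrite !mxE normCK.
Qed.

End NormalSpectral.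

(* The spectral theorem is only available over an algebraically closed field,
   so M is diagonalised in R[i]. *)
Lemma symmetric_rayleigh_le_eigenvalue {R : rcfType} {n} {M : 'M[R]_n.+1}
    (u : 'rV_n.+1) :
  M^T = M -> exists2 l, eigenvalue M l & (u *m M *m u^T) 0 0 <= l * (u *m u^T) 0 0.
Proof.
move=> symM; pose toC := real_complex R; pose Mc := map_mx toC M.
have realC x : toC x \is Num.real by rewrite /toC /real_complex_def complex_real.
have hermMc : Mc \is hermsymmx.
  rewrite qualifE expr0 scale1r; apply/eqP/matrixP => i j.
  by rewrite !mxE conj_Creal // -{1}symM mxE.
pose d := spectral_diag Mc.
have d_real k : d 0 k \is Num.real.
  exact: (mxOverP (hermitian_spectral_diag_real hermMc)).
pose kmax := [arg max_(k > ord0) complex.Re (d 0 k)]%O.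
have d_le_max k : complex.Re (d 0 k) <= complex.Re (d 0 kmax).
  by rewrite /kmax; case: arg_maxP => // i _; apply.
exists (complex.Re (d 0 kmax)).
  have := eigenvalue_spectral_diag (hermitian_normalmx hermMc) kmax.
  by rewrite -(RRe_real (d_real kmax)) -(eigenvalue_map toC).
pose uc := map_mx toC u.
have ucT : uc^T = (uc ^t* )%sesqui.
  by apply/matrixP => i j; rewrite !mxE conj_Creal.
rewrite -lecR.
have -> : ((u *m M *m u^T) 0 0)%:C%C = (uc *m Mc *m uc^T) 0 0.
  by rewrite map_trmx -!map_mxM [RHS]mxE.
have -> : (complex.Re (d 0 kmax) * (u *m u^T) 0 0)%:C%C =
    d 0 kmax * (uc *m uc^T) 0 0.
  rewrite -[in RHS](RRe_real (d_real kmax)) rmorphM.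
  by rewrite map_trmx -map_mxM [in RHS]mxE.
rewrite ucT spectral_quadratic_form ?hermitian_normalmx //.
rewrite (spectral_sqr_norm (A := Mc)) mulr_sumr.
apply: ler_sum => k _; apply: ler_wpM2r; first exact: exprn_ge0.
by rewrite -(RRe_real (d_real k)) -(RRe_real (d_real kmax)) lecR.
Qed.

Lemma norm_eigenvalue_le (R : realFieldType) n (A : 'M[R]_n) a c :
  eigenvalue A a -> (forall k, \sum_j `|A j k| <= c) -> `|a| <= c.
Proof.
move=> /eigenvalueP[v vA v_neq0] colA.
have [j0 vj0] : exists j, v 0 j != 0.
  apply/existsP; apply: contraR v_neq0 => /existsPn v0.
  by apply/eqP/rowP => j; rewrite mxE; apply/eqP/negPn.
pose k := [arg max_(k > j0) `|v 0 k|]%O.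
have vk_max j : `|v 0 j| <= `|v 0 k|.
  by rewrite /k; case: arg_maxP => // i _; apply.
have vk_gt0 : 0 < `|v 0 k| by apply: lt_le_trans (vk_max j0); rewrite normr_gt0.
rewrite -(ler_pM2l vk_gt0) -normrM [v 0 k * a]mulrC.
have -> : a * v 0 k = \sum_j v 0 j * A j k by move/rowP/(_ k): vA; rewrite !mxE.
apply: le_trans (ler_norm_sum _ _ _) _.
apply: le_trans (ler_wpM2l (ltW vk_gt0) (colA k)); rewrite mulr_sumr.
apply: ler_sum => j _; rewrite normrM.
by apply: ler_wpM2r; [exact: normr_ge0 | exact: vk_max].
Qed.

Section Mean.
Context {R : realFieldType} {r : nat} (z : 'I_r -> R).
Let mean := (\sum_j z j) / r%:R.

Lemma sum_sqr_sub_mean :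
  \sum_i (z i - mean) ^+ 2 = \sum_i z i ^+ 2 - (\sum_j z j) ^+ 2 / r%:R.
Proof.
rewrite (eq_bigr (fun i => z i ^+ 2 - (z i * mean) *+ 2 + mean ^+ 2)); last first.
  by move=> i _; rewrite sqrrB.
rewrite big_split /= sumrB sumrMnl -mulr_suml sumr_const card_ord /mean.
have [->|r_neq0] := eqVneq (r%:R : R) 0.
  by rewrite invr0 !mulr0 mul0rn expr0n /= mul0rn subr0 addr0.
by rewrite -mulr_natr -[_ *+ r]mulr_natr; field.
Qed.

Lemma sqr_sum_div_le_sum_sqr : (\sum_i z i) ^+ 2 / r%:R <= \sum_i z i ^+ 2.
Proof.
by rewrite -subr_ge0 -sum_sqr_sub_mean; apply: sumr_ge0 => i _; apply: sqr_ge0.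
Qed.

Lemma sum_sqr_le_sqr_sum_div_eq_mean :
  \sum_i z i ^+ 2 <= (\sum_i z i) ^+ 2 / r%:R -> forall i, z i = mean.
Proof.
rewrite -subr_le0 -sum_sqr_sub_mean => dev_le0 i.
have dev0 : \sum_k (z k - mean) ^+ 2 = 0.
  by apply: le_anti; rewrite dev_le0 sumr_ge0 // => k _; apply: sqr_ge0.
apply/eqP; rewrite -subr_eq0 -sqrf_eq0; apply/eqP.
exact: (psumr_eq0P (fun k _ => sqr_ge0 (z k - mean)) dev0).
Qed.

Lemma const_eq_mean : (forall i k, z i = z k) -> forall i, z i = mean.
Proof.
move=> z_const i; rewrite /mean (eq_bigr (fun=> z i)) => [|k _]; last exact: z_const.
have r_gt0 : (0 < r)%N by apply: leq_ltn_trans (ltn_ord i).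
by rewrite sumr_const card_ord -[z i *+ r]mulr_natr mulfK // pnatr_eq0 -lt0n.
Qed.

End Mean.

Section ColumnStochastic.
Context {R : realType} {r n : nat} {W : 'M[R]_(r, n)}.

Lemma sum_row_sum : \sum_i row_sum W i = \sum_j col_sum W j.
Proof. exact: exchange_big. Qed.

Lemma row_sum_le_max_row_sum i : row_sum W i <= max_row_sum W.
Proof. exact: le_bigmax. Qed.

Lemma max_row_sum_const c :
  (0 < r)%N -> 0 <= c -> (forall i, row_sum W i = c) -> max_row_sum W = c.
Proof.
move=> r_gt0 c_ge0 zc; apply: le_anti.
rewrite -{2}(zc (Ordinal r_gt0)) row_sum_le_max_row_sum andbT.
by apply: bigmax_le => // i _; rewrite zc.
Qed.

Lemma quadratic_form_gram_const1 (u := const_mx 1 : 'rV[R]_n) :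
  (u *m (W^T *m W) *m u^T) 0 0 = \sum_i row_sum W i ^+ 2.
Proof.
have uWT i : (u *m W^T) 0 i = row_sum W i.
  by rewrite mxE; apply: eq_bigr => j _; rewrite !mxE mul1r.
rewrite mulmxA -mulmxA -[W *m u^T]trmxK trmx_mul trmxK mxE.
by apply: eq_bigr => i _; rewrite [_^T i 0]mxE uWT expr2.
Qed.

Hypothesis W_col1 : forall j, col_sum W j = 1.

Lemma sum_row_sum_col_stochastic : \sum_i row_sum W i = n%:R.
Proof.
by rewrite sum_row_sum (eq_bigr _ (fun j _ => W_col1 j)) sumr_const card_ord.
Qed.

Lemma const_row_sum_max_row_sum :
  (0 < r)%N -> (forall i k, row_sum W i = row_sum W k) ->
  max_row_sum W = n%:R / r%:R.
Proof.
move=> r_gt0 z_const; apply: max_row_sum_const; rewrite ?divr_ge0 //.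
by rewrite -sum_row_sum_col_stochastic; apply: const_eq_mean.
Qed.

Hypothesis W_ge0 : forall i j, 0 <= W i j.

Lemma sum_gram_col_le_max_row_sum k :
  \sum_j `|(W^T *m W) j k| <= max_row_sum W.
Proof.
have gram_ge0 j : 0 <= (W^T *m W) j k.
  by rewrite mxE; apply: sumr_ge0 => i _; rewrite !mxE mulr_ge0.
under eq_bigr do rewrite ger0_norm // mxE.
rewrite exchange_big /= -[leRHS]mul1r -(W_col1 k) mulr_suml.
apply: ler_sum => i _; under eq_bigr do rewrite !mxE mulrC.
by rewrite -mulr_sumr ler_wpM2l // row_sum_le_max_row_sum.
Qed.

Lemma eigenvalue_gram_le_max_row_sum a :
  eigenvalue (W^T *m W) a -> a <= max_row_sum W.
Proof.
move=> ev_a; apply: le_trans (ler_norm a) _.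
exact: norm_eigenvalue_le ev_a sum_gram_col_le_max_row_sum.
Qed.

End ColumnStochastic.

Lemma eigenvalue_gram_le_sqr_largest_singular_value (R : realType) r n
    (W : 'M[R]_(r, n)) s l :
  largest_singular_value W s -> eigenvalue (W^T *m W) l -> 0 <= l -> l <= s ^+ 2.
Proof.
move=> [[s_ge0 _] s_max] ev_l l_ge0.
have sv : singular_value W (Num.sqrt l) by split; rewrite ?sqrtr_ge0 ?sqr_sqrtr.
by rewrite -(sqr_sqrtr l_ge0) ler_sqr ?nnegrE ?sqrtr_ge0 ?(s_max _ sv).
Qed.

Section LargestSingularValue.
Context {R : realType} {r n : nat} {W : 'M[R]_(r, n.+1)} {s : R}.
Hypothesis W_col1 : forall j, col_sum W j = 1.
Hypothesis s_max : largest_singular_value W s.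

Lemma sum_sqr_row_sum_le_sqr_largest_singular_value :
  \sum_i row_sum W i ^+ 2 <= s ^+ 2 * n.+1%:R.
Proof.
have gram_sym : (W^T *m W)^T = W^T *m W by rewrite trmx_mul trmxK.
have [l ev_l] := symmetric_rayleigh_le_eigenvalue (const_mx 1) gram_sym.
rewrite quadratic_form_gram_const1 (_ : (_ *m _) 0 0 = n.+1%:R); last first.
  rewrite mxE (eq_bigr (fun=> 1)) ?sumr_const ?card_ord // => j _.
  by rewrite !mxE mulr1.
move=> z_le_l; have l_ge0 : 0 <= l.
  rewrite -(pmulr_lge0 _ (ltr0Sn _ n)); apply: le_trans z_le_l.
  by apply: sumr_ge0 => i _; apply: sqr_ge0.
apply: le_trans z_le_l (ler_wpM2r (ler0n _ _) _).
exact: eigenvalue_gram_le_sqr_largest_singular_value s_max ev_l l_ge0.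
Qed.

Lemma mean_row_sum_le_sqr_largest_singular_value : n.+1%:R / r%:R <= s ^+ 2.
Proof.
rewrite -(ler_pM2r (ltr0Sn _ n)).
apply: le_trans sum_sqr_row_sum_le_sqr_largest_singular_value.
rewrite mulrAC -expr2 -(sum_row_sum_col_stochastic W_col1).
exact: sqr_sum_div_le_sum_sqr.
Qed.

Lemma row_sum_eq_mean :
  s ^+ 2 = n.+1%:R / r%:R -> forall i, row_sum W i = n.+1%:R / r%:R.
Proof.
move=> s_mean; rewrite -(sum_row_sum_col_stochastic W_col1).
apply: sum_sqr_le_sqr_sum_div_eq_mean.
apply: le_trans sum_sqr_row_sum_le_sqr_largest_singular_value _.
by rewrite s_mean (sum_row_sum_col_stochastic W_col1) mulrAC -expr2.
Qed.

End LargestSingularValue.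

Theorem proposition7 (R : realType) (r n : nat) (W : 'M[R]_(r, n)) (s1 : R) :
  (0 < r)%N -> (r <= n)%N ->
  (forall i j, 0 <= W i j) ->
  \rank W = r ->
  (forall j, col_sum W j = 1) ->
  largest_singular_value W s1 ->
  (n%:R / r%:R <= s1 ^+ 2 /\ s1 ^+ 2 <= max_row_sum W) /\
  (s1 ^+ 2 = n%:R / r%:R <-> (forall i k, row_sum W i = row_sum W k)) /\
  (s1 ^+ 2 = n%:R / r%:R <-> max_row_sum W = n%:R / r%:R).
Proof.
case: n W => [|n] W r_gt0 r_le_n; first by have := leq_trans r_gt0 r_le_n.
move=> W_ge0 _ W_col1 s1_max.
have lower := mean_row_sum_le_sqr_largest_singular_value W_col1 s1_max.
have upper := eigenvalue_gram_le_max_row_sum W_col1 W_ge0 _ s1_max.1.2.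
have const_max := const_row_sum_max_row_sum W_col1 r_gt0.
have eq_mean := row_sum_eq_mean W_col1 s1_max.
have max_eq : max_row_sum W = n.+1%:R / r%:R -> s1 ^+ 2 = n.+1%:R / r%:R.
  by move=> max_mean; apply: le_anti; rewrite lower -max_mean upper.
do 3!split => //.
- by move=> /eq_mean z_mean i k; rewrite !z_mean.
- by move/const_max/max_eq.
- by move=> /eq_mean z_mean; apply: const_max => i k; rewrite !z_mean.
Qed.
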